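(* Let $D$ be a knot diagram, and assume that every ineffective region set for $D$ has even cardinality. Call a crossing $c$ of $D$ a $(\star)$-crossing if the crossing change at $c$ is realized by region crossing changes about some set consisting of an odd number of regions of $D$. Then the crossing change at every crossing of $D$ is realized by some finite sequence of region freeze crossing changes on $D$ if and only if the number of $(\star)$-crossings of $D$ is even.
   Context: A knot diagram is a regular projection of a knot into the plane with over/under information at each crossing. Regions are the connected components of the complement of the projection; a crossing touches a region $R$ if it lies on the boundary of $R$. A region crossing change at $R$ changes every crossing touching $R$ (each once); a region freeze crossing change at $R$ changes every crossing not touching $R$ and leaves those touching $R$ unchanged. For a set $\mathcal{R}$ of distinct regions, region crossing changes about $\mathcal{R}$ means applying the region crossing change at each region of $\mathcal{R}$ once (so a crossing is changed iff it touches an odd number of regions of $\mathcal{R}$). A set $\mathcal{R}^{\ast}$ of regions is ineffective for $D$ if region crossing changes about $\mathcal{R}^{\ast}$ do not change $D$ in consequence. A sequence of local moves realizes the crossing change at a crossing $c$ if it produces the same diagram as changing the single crossing $c$ of $D$. *)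

From mathcomp Require Import all_boot all_fingroup.
Set Implicit Arguments. Unset Strict Implicit. Unset Printing Implicit Defensive.
Local Open Scope group_scope.

Section KnotDiagrams.
Variable dart : finType.

(* A knot projection on the 2-sphere (equivalently the plane, the point at
   infinity lying in some region) given as a combinatorial map:
   [rot] = cyclic rotation of the half-edges (darts) around each crossing,
   [opp] = the fixed-point-free involution pairing the two darts of an edge.
   Crossings = rot-orbits, edges = opp-orbits, regions = orbits of
   d |-> rot (opp d).  Straight-ahead walk: d |-> opp (rot^2 d). *)
Definition crossing_of (rot : {perm dart}) (d : dart) : {set dart} := porbit rot d.
Definition crossings (rot : {perm dart}) : {set {set dart}} := porbits rot.
Definition regions (rot opp : {perm dart}) : {set {set dart}} := porbits (opp * rot).

Definition is_knot_projection (rot opp : {perm dart}) : Prop :=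
  [/\ (forall d, opp (opp d) = d /\ opp d != d),
      (forall d, #|porbit rot d| = 4),
      (forall x y, connect (fun a b => (b == rot a) || (b == opp a)) x y),
      (* Euler formula V - E + F = 2 : genus zero (planar) *)
      (#|porbits rot| + #|porbits (opp * rot)| = #|porbits opp| + 2)%N
    & (* the curve has exactly one component (traversed in two directions) *)
      #|porbits (rot ^+ 2 * opp)| = 2%N].

(* Over/under information: [o d] = true iff dart d lies on the over-strand.
   Opposite darts lie on the same strand, adjacent ones on different strands. *)
Definition valid_over (rot : {perm dart}) (o : {ffun dart -> bool}) : Prop :=
  forall d, o (rot d) = ~~ o d.

Definition touches (R c : {set dart}) : bool := [exists d, (d \in R) && (d \in c)].

Definition crossing_change (c : {set dart}) (o : {ffun dart -> bool}) : {ffun dart -> bool} :=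
  [ffun d => o d (+) (d \in c)].

Definition region_cc (rot : {perm dart}) (R : {set dart}) (o : {ffun dart -> bool})
  : {ffun dart -> bool} :=
  [ffun d => o d (+) touches R (crossing_of rot d)].

Definition region_freeze_cc (rot : {perm dart}) (R : {set dart}) (o : {ffun dart -> bool})
  : {ffun dart -> bool} :=
  [ffun d => o d (+) ~~ touches R (crossing_of rot d)].

Definition region_cc_about (rot : {perm dart}) (S : {set {set dart}}) (o : {ffun dart -> bool})
  : {ffun dart -> bool} :=
  [ffun d => o d (+) odd #|[set R in S | touches R (crossing_of rot d)]|].

Definition ineffective (rot opp : {perm dart}) (o : {ffun dart -> bool})
  (S : {set {set dart}}) : Prop :=
  S \subset regions rot opp /\ region_cc_about rot S o = o.

Definition star_crossing (rot opp : {perm dart}) (o : {ffun dart -> bool})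
  (c : {set dart}) : bool :=
  [exists S : {set {set dart}}, [&& S \subset regions rot opp, odd #|S| &
    region_cc_about rot S o == crossing_change c o]].

Definition freeze_realizable (rot opp : {perm dart}) (o : {ffun dart -> bool})
  (c : {set dart}) : Prop :=
  exists s : seq {set dart}, all (fun R => R \in regions rot opp) s /\
    foldl (fun o' R => region_freeze_cc rot R o') o s = crossing_change c o.

End KnotDiagrams.

From mathcomp Require Import all_boot all_fingroup.
From mathcomp Require Import zify.
Set Implicit Arguments. Unset Strict Implicit. Unset Printing Implicit Defensive.

(* Region crossing changes act on the crossing information by adding a
   function of the crossings modulo 2, so the theorem is linear algebra over
   F_2 once we know that region crossing change is an unknotting operation:
   for every crossing c some set of regions changes exactly c.  To find one,
   follow the knot from c back to c.  This loop bounds, mod 2, a set of regions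
   (a 1-cycle on the sphere is a boundary, which we get by counting with
   Euler's formula), and these regions change c and nothing else, except at
   nugatory crossings, where one region fills two opposite corners.  Such
   crossings have shorter loops, nested inside the loop of c, so induction on
   the length of the loop takes care of them.
   As ineffective sets are even, the parity of a set of regions depends only
   on its effect.  A freeze sequence acts like the set S of regions of odd
   multiplicity in it followed, if |S| is odd, by a change of all crossings;
   comparing with sets changing c alone and all crossings, whose parities are
   those of [star c] and of the number of (star)-crossings, gives the result. *)

(** * Boolean functions on a finite type *)

Definition addf {T : finType} (f g : {ffun T -> bool}) : {ffun T -> bool} :=
  [ffun x => f x (+) g x].
Definition zerof {T : finType} : {ffun T -> bool} := [ffun => false].
Definition onef {T : finType} : {ffun T -> bool} := [ffun => true].
Definition indicator {T : finType} (A : {set T}) : {ffun T -> bool} := [ffun x => x \in A].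

Section AddF.
Variable T : finType.
Implicit Types f g h : {ffun T -> bool}.

Lemma addfA f g h : addf f (addf g h) = addf (addf f g) h.
Proof. by apply/ffunP=> x; rewrite !ffunE addbA. Qed.

Lemma addfC f g : addf f g = addf g f.
Proof. by apply/ffunP=> x; rewrite !ffunE addbC. Qed.

Lemma addff f : addf f f = zerof.
Proof. by apply/ffunP=> x; rewrite !ffunE addbb. Qed.

Lemma addf0 f : addf f zerof = f.
Proof. by apply/ffunP=> x; rewrite !ffunE addbF. Qed.

Lemma addfI f : injective (addf f).
Proof. by move=> g h /ffunP e; apply/ffunP=> x; have := e x; rewrite !ffunE => /addbI. Qed.

Lemma addfK f g : addf (addf f g) g = f.
Proof. by rewrite -addfA addff addf0. Qed.

End AddF.

Lemma card_ker_img (T U : finType) (G : {set {ffun T -> bool}})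
    (d : {ffun T -> bool} -> {ffun U -> bool}) :
  {in G &, forall f g, addf f g \in G} -> (forall f g, d (addf f g) = addf (d f) (d g)) ->
  #|G| = #|[set f in G | d f == zerof]| * #|d @: G|.
Proof.
move=> addG d_add.
rewrite -sum1_card (partition_big_imset d) /= mulnC -sum_nat_const.
apply: eq_bigr => _ /imsetP[f0 Gf0 ->]; rewrite sum1dep_card.
have -> : [set f | (f \in G) && (d f == d f0)] =
          [set addf k f0 | k in [set f in G | d f == zerof]].
  apply/setP=> f; rewrite inE; apply/andP/imsetP.
    move=> [Gf /eqP df]; exists (addf f f0); last by rewrite addfK.
    by rewrite inE addG //= d_add df addff.
  move=> [k]; rewrite inE => /andP[Gk /eqP dk] ->.
  by rewrite addG // d_add dk; split=> //; apply/eqP/ffunP=> x; rewrite !ffunE.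
by rewrite card_imset // => u v /= e; rewrite -(addfK u f0) e addfK.
Qed.

Section InvariantFunctions.
Variable T : finType.
Implicit Types (f g : {ffun T -> bool}) (p : {perm T}).

Definition inv_funs p := [set f : {ffun T -> bool} | [forall x, f (p x) == f x]].

Lemma inv_funs_porbit p f x y : f \in inv_funs p -> y \in porbit p x -> f y = f x.
Proof.
rewrite inE => /forallP f_inv /porbitP[i ->]; elim: i => [|i IHi].
  by rewrite expg0 perm1.
by rewrite expgSr permM (eqP (f_inv _)).
Qed.

Lemma addf_inv_funs p : {in inv_funs p &, forall f g, addf f g \in inv_funs p}.
Proof.
move=> f g; rewrite !inE => /forallP f_inv /forallP g_inv; apply/forallP=> x.
by rewrite !ffunE (eqP (f_inv x)) (eqP (g_inv x)).
Qed.

Lemma porbit_step p x : porbit p (p x) = porbit p x.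
Proof. by have := porbit_perm p 1 x; rewrite expg1. Qed.

Lemma porbit_eq p x y : y \in porbit p x -> porbit p y = porbit p x.
Proof. by move=> y_x; apply/eqP; rewrite eq_porbit_mem. Qed.

Lemma indicator_porbit_inv p x : indicator (porbit p x) \in inv_funs p.
Proof.
by rewrite inE; apply/forallP=> y; rewrite !ffunE porbit_sym porbit_step porbit_sym.
Qed.

Lemma card_inv_funs p : #|inv_funs p| = 2 ^ #|porbits p|.
Proof.
pose S := {R : {set T} | R \in porbits p}.
have inP x : porbit p x \in porbits p by apply: imset_f.
pose extend (h : {ffun S -> bool}) : {ffun T -> bool} :=
  [ffun x => h (Sub (porbit p x) (inP x))].
have -> : inv_funs p = extend @: [set: {ffun S -> bool}].
  apply/setP=> f; apply/idP/imsetP.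
    move=> f_inv; exists [ffun R : S => if [pick y in val R] is Some y then f y else false] => //.
    apply/ffunP=> x; rewrite !ffunE /=.
    case: pickP => [y Hy|no_y]; first by rewrite (inv_funs_porbit f_inv Hy).
    by move: (no_y x); rewrite porbit_id.
  move=> [h _ ->]; rewrite inE; apply/forallP=> x; rewrite !ffunE.
  by apply/eqP; congr (h _); apply: val_inj; rewrite /= porbit_step.
rewrite card_imset ?cardsT ?card_ffun ?card_bool ?card_sig //.
move=> h1 h2 e; apply/ffunP=> [[R R_orbit]]; have /imsetP[x _ defR] := R_orbit.
have := congr1 (fun f : {ffun T -> bool} => f x) e; rewrite /= !ffunE.
by subst R; rewrite (bool_irrelevance R_orbit (inP x)).
Qed.

Lemma inv_funs_ind p (P : {ffun T -> bool} -> Prop) :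
  P zerof ->
  (forall f x, f \in inv_funs p -> f x -> P (addf f (indicator (porbit p x))) -> P f) ->
  {in inv_funs p, forall f, P f}.
Proof.
move=> P0 Pstep f; have [n] := ubnP #|[set y | f y]|.
elim: n f => // n IHn f supp_lt f_inv.
case: (pickP [eta f]) => [x fx | no_supp]; last first.
  by have -> : f = zerof by apply/ffunP=> y; rewrite !ffunE no_supp.
apply: (Pstep f x f_inv fx); apply: IHn; last exact: addf_inv_funs (indicator_porbit_inv p x).
rewrite ltnS in supp_lt; apply: leq_trans supp_lt; apply: proper_card; apply/properP; split.
  apply/subsetP=> y; rewrite !inE !ffunE.
  by case y_x: (y \in porbit p x); [rewrite (inv_funs_porbit f_inv y_x) fx | rewrite addbF].
by exists x; rewrite !inE ?ffunE ?fx ?porbit_id.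
Qed.

End InvariantFunctions.

Section Parity.
Variable T : finType.
Implicit Types (A B C : {set T}) (P : pred T).

Lemma card_mem_uniq (s : seq T) P : uniq s -> #|[set x | (x \in s) && P x]| = count P s.
Proof.
move=> s_uniq; rewrite -size_filter -(card_uniqP (filter_uniq P s_uniq)).
by apply: eq_card => x; rewrite !inE mem_filter andbC.
Qed.

Lemma odd_card_mem4 (x0 x1 x2 x3 : T) P :
  x0 != x1 -> x1 != x2 -> x2 != x3 -> x3 != x0 ->
  odd #|[set x | (x \in [:: x0; x1; x2; x3]) && P x]| =
  P x0 (+) P x1 (+) P x2 (+) P x3 (+) ((x0 == x2) && P x0) (+) ((x1 == x3) && P x1).
Proof.
move=> n01 n12 n23 n30; have n03 : x0 != x3 by rewrite eq_sym.
case: (x0 =P x2) => [<-|/eqP n02]; case: (x1 =P x3) => [<-|/eqP n13] /=.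
- have -> : [set x | (x \in [:: x0; x1; x0; x1]) && P x] = [set x | (x \in [:: x0; x1]) && P x].
    by apply/setP=> x; rewrite !inE; case: (x == x0); case: (x == x1).
  rewrite card_mem_uniq /= ?inE ?(negbTE n01) //.
  by case: (P x0); case: (P x1).
- have -> : [set x | (x \in [:: x0; x1; x0; x3]) && P x] = [set x | (x \in [:: x0; x1; x3]) && P x].
    by apply/setP=> x; rewrite !inE; case: (x == x0); case: (x == x1); case: (x == x3).
  rewrite card_mem_uniq /= ?inE ?(negbTE n01) ?(negbTE n03) ?(negbTE n13) //.
  by case: (P x0); case: (P x1); case: (P x3).
- have -> : [set x | (x \in [:: x0; x1; x2; x1]) && P x] = [set x | (x \in [:: x0; x1; x2]) && P x].
    by apply/setP=> x; rewrite !inE; case: (x == x0); case: (x == x1); case: (x == x2).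
  rewrite card_mem_uniq /= ?inE ?(negbTE n01) ?(negbTE n02) ?(negbTE n12) //.
  by case: (P x0); case: (P x1); case: (P x2).
- rewrite card_mem_uniq /= ?inE ?(negbTE n01) ?(negbTE n02) ?(negbTE n03) ?(negbTE n12)
    ?(negbTE n13) ?(negbTE n23) //.
  by case: (P x0); case: (P x1); case: (P x2); case: (P x3).
Qed.

Definition sdiff A B := (A :\: B) :|: (B :\: A).

Lemma odd_sdiff A B : odd #|sdiff A B| = odd #|A| (+) odd #|B|.
Proof.
have -> : sdiff A B = (A :|: B) :\: (A :&: B).
  by apply/setP=> x; rewrite !inE; case: (x \in A); case: (x \in B).
have I_sub : A :&: B \subset A :|: B := subset_trans (subsetIl A B) (subsetUl A B).
by rewrite cardsD (setIidPr I_sub) oddB ?subset_leq_card // -oddD cardsUI oddD.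
Qed.

Lemma sdiff_sub A B C : A \subset C -> B \subset C -> sdiff A B \subset C.
Proof. by move=> AC BC; rewrite subUset !(subset_trans (subsetDl _ _)). Qed.

Lemma sdiff_sep A B P : [set x in sdiff A B | P x] = sdiff [set x in A | P x] [set x in B | P x].
Proof. by apply/setP=> x; rewrite !inE; case: (x \in A); case: (x \in B); case: (P x). Qed.

Lemma odd_count_odd_mult (s : seq T) P :
  odd (count P s) = odd #|[set x | odd (count_mem x s) && P x]|.
Proof.
elim: s => [|y s IHs] /=.
  by rewrite (_ : [set x | false && P x] = set0) ?cards0 //; apply/setP=> x; rewrite !inE.
have -> : [set x | odd ((y == x) + count_mem x s) && P x] =
    sdiff [set x | odd (count_mem x s) && P x] (if P y then [set y] else set0).
  apply/setP=> x; rewrite /sdiff !inE oddD eq_sym.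
  case: (x =P y) => [->|/eqP/negbTE ne]; case: (P y);
    by rewrite ?inE ?eqxx ?ne ?andbT ?andbF ?orbF //=; case: (odd _).
rewrite odd_sdiff oddD IHs.
by case: (P y); rewrite ?cards1 ?cards0 /= ?addbF // addbC.
Qed.

End Parity.

(** * Cochains of the combinatorial map *)

Section CombinatorialMap.
Variables (dart : finType) (rot opp : {perm dart}).
Hypothesis oppK : involutive opp.
Hypothesis opp_neq : forall d, opp d != d.
Hypothesis card_crossing : forall d, #|porbit rot d| = 4.
Hypothesis map_connected : forall x y, connect (fun a b => (b == rot a) || (b == opp a)) x y.
Hypothesis euler_formula : #|porbits rot| + #|porbits (opp * rot)| = #|porbits opp| + 2.

Local Notation r x := (rot x).
Local Notation face := (opp * rot)%g.
Local Notation crossing x := (indicator (porbit rot x)).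
Implicit Types (f g h : {ffun dart -> bool}) (a d x y z : dart).

Lemma rot4K d : r (r (r (r d))) = d.
Proof. by have := iter_porbit rot d; rewrite card_crossing. Qed.

Lemma crossing_uniq d : uniq [:: d; r d; r (r d); r (r (r d))].
Proof. by have := uniq_traject_porbit rot d; rewrite card_crossing. Qed.

Lemma mem_crossing d y : (y \in porbit rot d) = (y \in [:: d; r d; r (r d); r (r (r d))]).
Proof. by rewrite porbit_traject card_crossing. Qed.

Lemma map_connected_ind (P : dart -> Prop) x0 :
  P x0 -> (forall a, P a -> P (r a)) -> (forall a, P a -> P (opp a)) -> forall y, P y.
Proof.
move=> P0 Prot Popp y; have /connectP[p p_path ->] := map_connected x0 y.
elim: p x0 P0 p_path => //= a p IHp x0 P0 /andP[/orP[]/eqP-> p_path]; apply: IHp p_path; auto.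
Qed.

(* Functions invariant under [face], [opp] and [rot] are functions on regions,
   edges and crossings.  The regions on the two sides of the edge of [x] are
   those of [x] and [rot x], so [dface] is the coboundary from regions to
   edges, and [dedge] sums an edge function around each crossing. *)
Definition dface g : {ffun dart -> bool} := [ffun x => g x (+) g (r x)].
Definition dedge (z : {ffun dart -> bool}) : {ffun dart -> bool} :=
  [ffun x => z x (+) z (r x) (+) z (r (r x)) (+) z (r (r (r x)))].

Lemma face_inv g x : g \in inv_funs face -> g (r (opp x)) = g x.
Proof. by rewrite inE => /forallP/(_ x)/eqP; rewrite permM. Qed.

Lemma face_inv_opp g x : g \in inv_funs face -> g (opp x) = g (r x).
Proof. by move=> g_inv; rewrite -(face_inv (opp x) g_inv) oppK. Qed.

Lemma dface_add f g : dface (addf f g) = addf (dface f) (dface g).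
Proof. by apply/ffunP=> x; rewrite !ffunE addbACA. Qed.

Lemma dedge_add f g : dedge (addf f g) = addf (dedge f) (dedge g).
Proof.
apply/ffunP=> x; rewrite !ffunE.
by case: (f x); case: (f (r x)); case: (f (r (r x))); case: (f (r (r (r x))));
   case: (g x); case: (g (r x)); case: (g (r (r x))); case: (g (r (r (r x)))).
Qed.

Lemma dface_inv g : g \in inv_funs face -> dface g \in inv_funs opp.
Proof.
move=> g_inv; rewrite inE; apply/forallP=> x; rewrite !ffunE.
by rewrite (face_inv_opp _ g_inv) (face_inv _ g_inv) addbC.
Qed.

Lemma dedge_dface g : dedge (dface g) = zerof.
Proof.
apply/ffunP=> x; rewrite !ffunE rot4K.
by case: (g x); case: (g (r x)); case: (g (r (r x))); case: (g (r (r (r x)))).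
Qed.

Lemma zerof_inv (p : {perm dart}) : zerof \in inv_funs p.
Proof. by rewrite inE; apply/forallP=> x; rewrite !ffunE. Qed.

Lemma onef_inv (p : {perm dart}) : onef \in inv_funs p.
Proof. by rewrite inE; apply/forallP=> x; rewrite !ffunE. Qed.

Lemma dface_eq0 g : g \in inv_funs face -> dface g = zerof -> g = zerof \/ g = onef.
Proof.
move=> g_inv dg0; have g_rot a : g (r a) = g a.
  by have := congr1 (fun h => h a) dg0; rewrite !ffunE; case: (g a); case: (g (r a)).
case: (pickP (fun _ : dart => true)) => [x0 _|no_dart].
  2: by left; apply/ffunP=> x; move: (no_dart x).
have g_const : forall y, g y = g x0.
  by apply: (@map_connected_ind (fun y => g y = g x0) x0 erefl) => a ga;
    rewrite ?(face_inv_opp _ g_inv) g_rot.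
by case g_x0: (g x0); [right|left]; apply/ffunP=> y; rewrite !ffunE g_const.
Qed.

Lemma card_ker_dface x0 : #|[set g in inv_funs face | dface g == zerof]| = 2.
Proof.
have -> : [set g in inv_funs face | dface g == zerof] = [set zerof; onef].
  apply/setP=> g; rewrite in_set in_set2; apply/andP/orP.
    by move=> [g_inv /eqP/(dface_eq0 g_inv)] [] ->; [left|right].
  by case=> /eqP ->; rewrite ?zerof_inv ?onef_inv; split=> //; apply/eqP/ffunP=> x; rewrite !ffunE.
rewrite cards2; case: eqP => // /(congr1 (fun h => h x0)).
by rewrite !ffunE.
Qed.

Lemma dedge_dart a : dedge (indicator [set a]) = crossing a.
Proof.
apply/ffunP=> y; rewrite !ffunE !inE porbit_sym mem_crossing.
have := congr1 odd (count_uniq_mem a (crossing_uniq y)).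
by rewrite oddb /= addn0 !oddD !oddb !addbA => <-.
Qed.

Lemma dedge_edge a :
  dedge (indicator [set a; opp a]) = addf (crossing a) (crossing (opp a)).
Proof.
rewrite -!dedge_dart -dedge_add; congr dedge; apply/ffunP=> y; rewrite !ffunE !inE.
by case: (y =P a) => [->|//]; rewrite eq_sym (negbTE (opp_neq a)).
Qed.

Lemma edge_inv a : indicator [set a; opp a] \in inv_funs opp.
Proof.
rewrite inE; apply/forallP=> y; rewrite !ffunE !inE.
by rewrite (can2_eq oppK oppK) [opp y == _](can2_eq oppK oppK) oppK orbC.
Qed.

Local Notation dedge_img := (dedge @: inv_funs opp).

Lemma dedge_img_add f g : f \in dedge_img -> g \in dedge_img -> addf f g \in dedge_img.
Proof.
move=> /imsetP[z z_inv ->] /imsetP[w w_inv ->]; rewrite -dedge_add.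
by apply: imset_f; apply: addf_inv_funs.
Qed.

Lemma zerof_dedge_img : zerof \in dedge_img.
Proof. by rewrite -(dedge_dface zerof) imset_f // dface_inv ?zerof_inv. Qed.

Lemma crossing_pair_dedge_img x0 y : addf (crossing y) (crossing x0) \in dedge_img.
Proof.
move: y; apply: (@map_connected_ind (fun y => addf (crossing y) (crossing x0) \in dedge_img) x0).
- by rewrite addff zerof_dedge_img.
- by move=> a; rewrite porbit_step.
move=> a a_x0; have -> : addf (crossing (opp a)) (crossing x0) =
    addf (addf (crossing a) (crossing x0)) (dedge (indicator [set a; opp a])).
  rewrite dedge_edge; apply/ffunP=> y; rewrite !ffunE.
  by case: (y \in porbit rot a); case: (y \in porbit rot x0); case: (y \in porbit rot (opp a)).
exact: dedge_img_add a_x0 (imset_f dedge (edge_inv a)).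
Qed.

Lemma card_inv_rot x0 : #|inv_funs rot| <= 2 * #|dedge_img|.
Proof.
have cover : {in inv_funs rot, forall h, h \in dedge_img \/ addf h (crossing x0) \in dedge_img}.
  apply: inv_funs_ind; first by left; exact: zerof_dedge_img.
  move=> h x _ _ IH; have x_x0 := crossing_pair_dedge_img x0 x.
  case: IH => [img|img]; [right|left]; have := dedge_img_add img x_x0.
    by rewrite addfA addfK.
  by rewrite [addf (crossing x) _]addfC addfA !addfK.
apply: (@leq_trans #|dedge_img :|: [set addf f (crossing x0) | f in dedge_img]|).
  apply/subset_leq_card/subsetP=> h /cover[img | img]; rewrite inE ?img //.
  by apply/orP; right; apply/imsetP; exists (addf h (crossing x0)); rewrite ?addfK.
by rewrite mul2n -addnn (leq_trans (leq_card_setU _ _)) // leq_add2l leq_imset_card.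
Qed.

Lemma dedge_eq0_dface x0 (z : {ffun dart -> bool}) : z \in inv_funs opp -> dedge z = zerof ->
  exists2 g, g \in inv_funs face & dface g = z.
Proof.
move=> z_inv z_cycle.
pose cycles := [set w in inv_funs opp | dedge w == zerof].
pose bounds := dface @: inv_funs face.
have bounds_sub : bounds \subset cycles.
  by apply/subsetP=> _ /imsetP[g g_inv ->]; rewrite inE dface_inv //= dedge_dface eqxx.
(* [2^E = |cycles| |dedge_img|], [2^F = 2 |bounds|] and [2^V <= 2 |dedge_img|], while
   Euler's formula gives [2^V 2^F = 4 2^E]; hence [|cycles| <= |bounds|]. *)
have card_edges : #|inv_funs opp| = #|cycles| * #|dedge_img|.
  exact: card_ker_img (@addf_inv_funs _ opp) dedge_add.
have card_faces : #|inv_funs face| = 2 * #|bounds|.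
  by rewrite (card_ker_img (@addf_inv_funs _ face) dface_add) card_ker_dface.
have card_crossings := card_inv_rot x0.
have euler2 : #|inv_funs rot| * #|inv_funs face| = 4 * #|inv_funs opp|.
  by rewrite !card_inv_funs -expnD euler_formula expnD mulnC.
have img_pos : 0 < #|dedge_img| by apply/card_gt0P; exists zerof; exact: zerof_dedge_img.
have : #|cycles| * (4 * #|dedge_img|) <= #|bounds| * (4 * #|dedge_img|) by nia.
rewrite leq_mul2r muln_eq0 (negbTE (lt0n_neq0 img_pos)) /= => le_cycles.
have : z \in cycles by rewrite inE z_inv z_cycle eqxx.
have <- : bounds = cycles by apply/eqP; rewrite eqEcard bounds_sub le_cycles.
by move=> /imsetP[g g_inv ->]; exists g.
Qed.

Local Notation region y := (porbit face y).

Lemma dface_rot g k y : dface g = k -> g (r y) = g y (+) k y.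
Proof. by move=> <-; rewrite ffunE; case: (g y); case: (g (r y)). Qed.

(* As [dedge onef = zerof], the regions are checkerboard colourable. *)
Lemma region_rot_neq y : region y != region (r y).
Proof.
have onef_cycle : dedge onef = zerof by apply/ffunP=> z; rewrite !ffunE.
have [chi chi_inv dchi] := dedge_eq0_dface y (onef_inv opp) onef_cycle.
apply/negP=> /eqP e; have : r y \in region y by rewrite e porbit_id.
by move=> /(inv_funs_porbit chi_inv); rewrite (dface_rot y dchi) ffunE; case: (chi y).
Qed.

Lemma touches_region x d : touches (region x) (porbit rot d) =
  (region x \in [:: region d; region (r d); region (r (r d)); region (r (r (r d)))]).
Proof.
apply/existsP/idP.
  move=> [y /andP[y_x]]; rewrite mem_crossing => y_d.
  have <- : region y = region x by apply/eqP; rewrite eq_porbit_mem.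
  by rewrite !inE; move: y_d; rewrite !inE => /or4P[]/eqP ->; rewrite eqxx ?orbT.
rewrite !inE => /or4P[]/eqP e;
  [exists d | exists (r d) | exists (r (r d)) | exists (r (r (r d)))];
  by rewrite e porbit_id mem_crossing !inE eqxx ?orbT.
Qed.

Definition rcc_effect (S : {set {set dart}}) : {ffun dart -> bool} :=
  [ffun d => odd #|[set R in S | touches R (crossing_of rot d)]|].

Definition realizable (v : {ffun dart -> bool}) :=
  exists2 S : {set {set dart}}, S \subset regions rot opp & rcc_effect S = v.

Lemma rcc_effect_sdiff (S T : {set {set dart}}) :
  rcc_effect (sdiff S T) = addf (rcc_effect S) (rcc_effect T).
Proof. by apply/ffunP=> d; rewrite !ffunE sdiff_sep odd_sdiff. Qed.

Lemma rcc_effect0 : rcc_effect set0 = zerof.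
Proof.
apply/ffunP=> d; rewrite !ffunE.
by rewrite (_ : [set R in set0 | _] = set0) ?cards0 //; apply/setP=> R; rewrite !inE.
Qed.

Lemma realizable0 : realizable zerof.
Proof. by exists set0; rewrite ?sub0set ?rcc_effect0. Qed.

Lemma realizable_add v w : realizable v -> realizable w -> realizable (addf v w).
Proof.
move=> [S S_sub <-] [T T_sub <-]; exists (sdiff S T); last exact: rcc_effect_sdiff.
exact: sdiff_sub.
Qed.

Lemma realizable_inv_rot h : h \in inv_funs rot ->
  (forall x, h x -> realizable (crossing x)) -> realizable h.
Proof.
move: h; apply: inv_funs_ind => [_|h x h_inv hx IH realizable_h]; first exact: realizable0.
rewrite -(addfK h (crossing x)); apply: realizable_add (realizable_h x hx).
apply: IH => y; rewrite !ffunE; case y_x: (y \in porbit rot x).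
  by rewrite (inv_funs_porbit h_inv y_x) hx.
by rewrite addbF; exact: realizable_h.
Qed.

Definition regions_of g := [set R in porbits face | [exists y in R, g y]].

(* Correction for opposite corners of a crossing lying in the same region,
   which is then counted once instead of twice. *)
Definition defect g d :=
  ((region d == region (r (r d))) && g d) (+) ((region (r d) == region (r (r (r d)))) && g (r d)).

Definition defectf g : {ffun dart -> bool} := [ffun d => defect g d].

Definition nugatory d :=
  (region d == region (r (r d))) || (region (r d) == region (r (r (r d)))).

Lemma mem_regions_of g y : g \in inv_funs face -> (region y \in regions_of g) = g y.
Proof.
move=> g_inv; rewrite inE imset_f //=; apply/existsP/idP.
  by move=> [z /andP[z_y gz]]; rewrite -(inv_funs_porbit g_inv z_y).
by move=> gy; exists y; rewrite porbit_id.
Qed.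

Lemma rcc_effect_regions_of g : g \in inv_funs face ->
  rcc_effect (regions_of g) = addf [ffun d => dface g d (+) dface g (r (r d))] (defectf g).
Proof.
move=> g_inv; apply/ffunP=> d; rewrite !ffunE.
have -> : [set R in regions_of g | touches R (crossing_of rot d)] =
    [set R | (R \in [:: region d; region (r d); region (r (r d)); region (r (r (r d)))]) &&
             (R \in regions_of g)].
  apply/setP=> R; rewrite !inE andbC; case R_face: (R \in porbits face); rewrite ?andbF //=.
  by move: R_face => /imsetP[x _ ->]; rewrite /crossing_of touches_region !inE.
rewrite odd_card_mem4 ?region_rot_neq //; last first.
  by have := region_rot_neq (r (r (r d))); rewrite rot4K eq_sym.
rewrite !mem_regions_of // /defect.
by rewrite !addbA.
Qed.

Lemma defect_rot g d : g \in inv_funs face -> defect g (r d) = defect g d.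
Proof.
move=> g_inv; rewrite /defect rot4K addbC eq_sym; congr addb.
by case: eqP => //= e; apply: (inv_funs_porbit g_inv); rewrite e porbit_id.
Qed.

Lemma defectf_inv g : g \in inv_funs face -> defectf g \in inv_funs rot.
Proof. by move=> g_inv; rewrite inE; apply/forallP=> d; rewrite !ffunE defect_rot. Qed.

Lemma defect_crossing g d y : g \in inv_funs face -> y \in porbit rot d -> defect g y = defect g d.
Proof. by move=> g_inv y_d; have := inv_funs_porbit (defectf_inv g_inv) y_d; rewrite !ffunE. Qed.

Lemma nugatory_crossing d y : y \in porbit rot d -> nugatory y = nugatory d.
Proof.
have nug_inv : [ffun x => nugatory x] \in inv_funs rot.
  rewrite inE; apply/forallP=> x; rewrite !ffunE /nugatory rot4K.
  by rewrite (eq_sym (region (r (r x)))) orbC.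
by move=> y_d; have := inv_funs_porbit nug_inv y_d; rewrite !ffunE.
Qed.

Lemma defect_nugatory g d : defect g d -> nugatory d.
Proof. by rewrite /defect /nugatory; case: (region d == _); case: (region (r d) == _). Qed.

(* Where [dface g] separates the corners of [x] along one strand only, [g]
   takes different values at opposite corners. *)
Lemma one_strand_not_nugatory g k x : g \in inv_funs face -> dface g = k ->
  k x = k (r (r x)) -> k (r x) = k (r (r (r x))) -> k x != k (r x) -> ~~ nugatory x.
Proof.
move=> g_inv dg kx kx1 k_neq; rewrite /nugatory negb_or; apply/andP; split.
  apply/negP=> /eqP e; have : g (r (r x)) = g x.
    by apply: (inv_funs_porbit g_inv); rewrite e porbit_id.
  rewrite (dface_rot (r x) dg) (dface_rot x dg).
  by move: k_neq; case: (k x); case: (k (r x)); case: (g x).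
apply/negP=> /eqP e; have : g (r (r (r x))) = g (r x).
  by apply: (inv_funs_porbit g_inv); rewrite e porbit_id.
rewrite (dface_rot (r (r x)) dg) (dface_rot (r x) dg) -kx.
by move: k_neq; case: (k x); case: (k (r x)); case: (g (r x)).
Qed.

(** * The traversal of the knot *)

Hypothesis one_component : #|porbits (rot ^+ 2 * opp)| = 2.

Local Notation walk := (rot ^+ 2 * opp)%g.

Lemma walkE x : walk x = opp (r (r x)).
Proof. by rewrite permM permX. Qed.

Lemma rot2_neq d : r (r d) != d.
Proof. by apply/eqP=> e; move: (crossing_uniq d); rewrite e /= !inE eqxx !orbT. Qed.

Lemma walk_rev y : walk (r (r (walk y))) = r (r y).
Proof. by rewrite !walkE rot4K oppK. Qed.

Lemma iter_walk_rev x k i : iter k walk x = r (r x) -> i <= k ->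
  r (r (iter i walk x)) = iter (k - i) walk x.
Proof.
move=> walk_k; elim: i => [|i IHi] lt_ik; first by rewrite subn0 walk_k.
apply: (@perm_inj _ walk); rewrite /= walk_rev IHi ?(ltnW lt_ik) //.
by rewrite -iterS subnSK.
Qed.

(* A walk from [x] to its reversal [rot^2 x] would, by [iter_walk_rev], turn
   back at its midpoint, which is either a dart [d = rot^2 d] or an edge
   [d = opp d]. *)
Lemma rot2_notin_walk_orbit x : r (r x) \notin porbit walk x.
Proof.
apply/negP=> /porbitP[k]; rewrite permX => /esym walk_k.
have [m [km | km]] : exists m, k = m.*2 \/ k = m.*2.+1.
  by exists k./2; have := odd_double_half k; case: (odd k) => /= e; [right|left]; lia.
- have := iter_walk_rev walk_k (i := m) ltac:(lia); rewrite km -addnn addnK => e.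
  by move: (rot2_neq (iter m walk x)); rewrite e eqxx.
- have := iter_walk_rev walk_k (i := m) ltac:(lia).
  rewrite km -addnn -addSn addnK iterS walkE => e.
  by move: (opp_neq (r (r (iter m walk x)))); rewrite -e eqxx.
Qed.

Lemma mem_walk_orbit b x : (x \in porbit walk b) = (r (r x) \notin porbit walk b).
Proof.
have two_orbits : porbits walk = [set porbit walk x; porbit walk (r (r x))].
  apply/esym/eqP; rewrite eqEcard cards2 one_component ltnS lt0b.
  rewrite eq_porbit_mem porbit_sym (rot2_notin_walk_orbit x) andbT.
  by apply/subsetP=> R; rewrite !inE => /orP[]/eqP ->; apply: imset_f.
have : porbit walk b \in porbits walk by apply: imset_f.
rewrite two_orbits !inE => /orP[]/eqP->.
  by rewrite porbit_id (negbTE (rot2_notin_walk_orbit x)).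
by rewrite porbit_id porbit_sym (negbTE (rot2_notin_walk_orbit x)).
Qed.

Section Traversal.
Variable b : dart.

Local Notation traversal := (porbit walk b).
Local Notation len := #|porbit walk b|.

Definition time y := index y (traject walk b len).

Lemma len_gt0 : 0 < len.
Proof. by rewrite lt0n card_porbit_neq0. Qed.

Lemma iter_walk_in k : iter k walk b \in traversal.
Proof. by rewrite -permX mem_porbit. Qed.

Lemma iter_walk_mod k : iter k walk b = iter (k %% len) walk b.
Proof.
rewrite {1}(divn_eq k len) addnC iterD; congr iter.
by elim: (k %/ len) => [|n IHn] //; rewrite mulSn iterD IHn iter_porbit.
Qed.

Lemma time_lt y : y \in traversal -> time y < len.
Proof.
by rewrite porbit_traject => y_in; rewrite /time -[X in _ < X](size_traject walk b) index_mem.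
Qed.

Lemma iter_time y : y \in traversal -> iter (time y) walk b = y.
Proof.
move=> y_in; rewrite -(nth_traject walk (time_lt y_in)) nth_index //.
by rewrite -porbit_traject.
Qed.

Lemma time_iter k : k < len -> time (iter k walk b) = k.
Proof.
move=> lt_k; rewrite /time -(nth_traject walk lt_k) index_uniq ?size_traject //.
exact: uniq_traject_porbit.
Qed.

Lemma time_inj (y z : dart) : y \in traversal -> z \in traversal -> time y = time z -> y = z.
Proof. by move=> y_in z_in e; rewrite -(iter_time y_in) -(iter_time z_in) e. Qed.

Lemma walk_in y : y \in traversal -> walk y \in traversal.
Proof. by move=> y_in; rewrite -(iter_time y_in) -iterS iter_walk_in. Qed.

Lemma time_walk y : y \in traversal -> time (walk y) = (time y).+1 %% len.
Proof.
move=> y_in; rewrite -{1}(iter_time y_in) -iterS iter_walk_mod time_iter //.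
by rewrite ltn_pmod // len_gt0.
Qed.

Lemma rot2_notin x : x \in traversal -> r (r x) \notin traversal.
Proof. by rewrite mem_walk_orbit. Qed.

Lemma rot2_in x : x \notin traversal -> r (r x) \in traversal.
Proof. by rewrite mem_walk_orbit negbK. Qed.

Lemma opp_notin y : y \in traversal -> opp y \notin traversal.
Proof.
move=> y_in; have : walk (r (r y)) \notin traversal.
  by rewrite porbit_sym porbit_step -porbit_sym rot2_notin.
by rewrite walkE rot4K.
Qed.

(* The traversal enters a crossing through a dart [x] and leaves it through
   [rot^2 x], so every edge has exactly one dart in [traversal]; [edge_time]
   is the time at which the traversal arrives along the edge of [y]. *)
Definition edge_time y := time (if y \in traversal then y else opp y).

Lemma edge_time_opp y : edge_time (opp y) = edge_time y.
Proof.
rewrite /edge_time; case: ifP => [oy_in | /negbT oy_out]; case: ifP => [y_in | /negbT y_out].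
- by move: (opp_notin y_in); rewrite oy_in.
- by [].
- by rewrite oppK.
- by move: (walk_in (rot2_in y_out)); rewrite walkE rot4K (negbTE oy_out).
Qed.

Lemma edge_time_in x : x \in traversal -> edge_time x = time x.
Proof. by move=> x_in; rewrite /edge_time x_in. Qed.

Lemma edge_time_rot2 x : x \in traversal -> edge_time (r (r x)) = (time x).+1 %% len.
Proof. by move=> x_in; rewrite /edge_time (negbTE (rot2_notin x_in)) -walkE time_walk. Qed.

(* [strand_in d] is the dart through which the traversal enters the crossing
   of [d] along the strand of [d], and [visit d] the time of that pass. *)
Definition strand_in d := if d \in traversal then d else r (r d).

Definition visit d := time (strand_in d).

Definition lo d := minn (visit d) (visit (r d)).
Definition hi d := maxn (visit d) (visit (r d)).

Lemma strand_in_in d : strand_in d \in traversal.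
Proof. by rewrite /strand_in; case: ifP => // /negbT; apply: rot2_in. Qed.

Lemma strand_in_id y : y \in traversal -> strand_in y = y.
Proof. by rewrite /strand_in => ->. Qed.

Lemma strand_in_rot2 d : strand_in (r (r d)) = strand_in d.
Proof.
rewrite /strand_in rot4K; case: ifP => d2_in; case: ifP => d_in //.
  by move: (rot2_notin d_in); rewrite d2_in.
by move/negbT: d_in => /rot2_in; rewrite d2_in.
Qed.

Lemma strand_in_rot d : strand_in (r (strand_in d)) = strand_in (r d).
Proof. by rewrite [strand_in d]/strand_in; case: ifP => // _; rewrite strand_in_rot2. Qed.

Lemma porbit_strand_in d : porbit rot (strand_in d) = porbit rot d.
Proof. by rewrite /strand_in; case: ifP => // _; rewrite !porbit_step. Qed.

Lemma strand_in_neq d : strand_in d != strand_in (r d).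
Proof.
have := crossing_uniq d; rewrite /= !inE !negb_or.
move=> /and4P[/and3P[n01 n02 n03] /andP[n12 n13] n23 _].
by rewrite /strand_in; case: ifP => _; case: ifP => _ //; rewrite eq_sym.
Qed.

Lemma crossing_traversal d z : z \in porbit rot d -> z \in traversal ->
  z = strand_in d \/ z = strand_in (r d).
Proof.
rewrite mem_crossing !inE /strand_in => /or4P[]/eqP -> z_in.
- by left; rewrite z_in.
- by right; rewrite z_in.
- by left; move: (rot2_notin z_in); rewrite rot4K => /negbTE ->.
- by right; move: (rot2_notin z_in); rewrite rot4K => /negbTE ->.
Qed.

Lemma lo_lt_hi d : lo d < hi d < len.
Proof.
have neq : visit d != visit (r d).
  apply: contraNneq (strand_in_neq d) => /(time_inj (strand_in_in _) (strand_in_in _))->.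
  exact: eqxx.
have := time_lt (strand_in_in d); have := time_lt (strand_in_in (r d)).
by rewrite /lo /hi /visit -/(visit d) -/(visit (r d)); move: neq; lia.
Qed.

Lemma mem_crossing_visit d0 d : (d \in porbit rot d0) = (visit d == lo d0) || (visit d == hi d0).
Proof.
have -> : (visit d == lo d0) || (visit d == hi d0) =
          (visit d == visit d0) || (visit d == visit (r d0)).
  by rewrite /lo /hi /minn /maxn; case: ltnP => _ //; rewrite orbC.
apply/idP/idP.
  move=> d_d0; have : strand_in d \in porbit rot d0.
    by rewrite porbit_sym porbit_strand_in -porbit_sym.
  by move=> /crossing_traversal /(_ (strand_in_in d)) [] e; rewrite /visit e eqxx ?orbT.
move=> /orP[]/eqP/(time_inj (strand_in_in _) (strand_in_in _)) e.
  by rewrite -porbit_strand_in -e porbit_strand_in porbit_id.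
by rewrite -porbit_step -porbit_strand_in -e porbit_strand_in porbit_id.
Qed.

Lemma mem_crossing_rot d0 y : (r y \in porbit rot d0) = (y \in porbit rot d0).
Proof. by rewrite porbit_sym porbit_step porbit_sym. Qed.

(** * Loops and their colourings *)

Definition arc p q : {ffun dart -> bool} :=
  [ffun y => (p < edge_time y) && (edge_time y <= q)].

Definition loop d := arc (lo d) (hi d).

Lemma arc_inv p q : arc p q \in inv_funs opp.
Proof. by rewrite inE; apply/forallP=> y; rewrite !ffunE edge_time_opp. Qed.

Lemma arc_step p q i : p < q < len -> i < len ->
  ((p < i) && (i <= q)) (+) ((p < i.+1 %% len) && (i.+1 %% len <= q)) = (i == p) || (i == q).
Proof.
move=> /andP[lt_pq lt_q] lt_i; case: (ltnP i.+1 len) => lt_Si.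
  rewrite modn_small //.
  by case: (ltnP p i); case: (leqP i q); case: (ltnP p i.+1); case: (leqP i.+1 q);
     case: eqP; case: eqP; move=> /= *; first [done | exfalso; lia].
have -> : i.+1 = len by lia.
rewrite modnn.
by case: (ltnP p i); case: (leqP i q); case: eqP; case: eqP;
   move=> /= *; first [done | exfalso; lia].
Qed.

Lemma arc_strand p q y : p < q < len ->
  arc p q y (+) arc p q (r (r y)) = (visit y == p) || (visit y == q).
Proof.
move=> pq_lt; have -> : arc p q y (+) arc p q (r (r y)) =
    arc p q (strand_in y) (+) arc p q (r (r (strand_in y))).
  by rewrite /strand_in; case: ifP => // _; rewrite rot4K addbC.
rewrite !ffunE edge_time_in ?strand_in_in // edge_time_rot2 ?strand_in_in //.
by rewrite arc_step // time_lt ?strand_in_in.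
Qed.

Lemma loop_strand d0 y : loop d0 y (+) loop d0 (r (r y)) = (y \in porbit rot d0).
Proof. by rewrite arc_strand ?lo_lt_hi // mem_crossing_visit. Qed.

Lemma dedge_loop d0 : dedge (loop d0) = zerof.
Proof.
apply/ffunP=> y; rewrite [dedge _ _]ffunE [zerof _]ffunE.
have := loop_strand d0 (r y); rewrite mem_crossing_rot -(loop_strand d0 y).
by case: (loop d0 y); case: (loop d0 (r y)); case: (loop d0 (r (r y)));
   case: (loop d0 (r (r (r y)))).
Qed.

Lemma loop_colouring d0 : exists2 g, g \in inv_funs face & dface g = loop d0.
Proof. exact: (@dedge_eq0_dface b (loop d0) (arc_inv _ _) (dedge_loop d0)). Qed.

Lemma region_diagonals d :
  ~~ ((region d == region (r (r d))) && (region (r d) == region (r (r (r d))))).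
Proof.
have [g g_inv dg] := loop_colouring d.
apply/negP => /andP[/eqP e1 /eqP e2].
have g02 : g (r (r d)) = g d by apply: (inv_funs_porbit g_inv); rewrite e1 porbit_id.
have g13 : g (r (r (r d))) = g (r d) by apply: (inv_funs_porbit g_inv); rewrite e2 porbit_id.
have := loop_strand d d; have := loop_strand d (r d).
rewrite mem_crossing_rot porbit_id.
rewrite (dface_rot (r d) dg) (dface_rot d dg) in g02.
rewrite (dface_rot (r (r d)) dg) (dface_rot (r d) dg) in g13.
move: g02 g13; set k := loop d.
by case: (g d); case: (g (r d)); case: (k d); case: (k (r d)); case: (k (r (r d)));
   case: (k (r (r (r d)))).
Qed.

Lemma rcc_effect_loop g d0 : g \in inv_funs face -> dface g = loop d0 ->
  rcc_effect (regions_of g) = addf (crossing d0) (defectf g).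
Proof.
move=> g_inv dg; rewrite rcc_effect_regions_of // dg; congr addf.
by apply/ffunP=> d; rewrite [LHS]ffunE loop_strand [RHS]ffunE.
Qed.

Lemma visit_off d0 d : d \notin porbit rot d0 -> visit d != lo d0 /\ visit d != hi d0.
Proof. by rewrite mem_crossing_visit negb_or => /andP. Qed.

Lemma arc_strand_off p q x : p < q < len -> x \in traversal -> time x != p -> time x != q ->
  arc p q x = (p < time x < q) /\ arc p q (r (r x)) = (p < time x < q).
Proof.
move=> /andP[lt_pq lt_q] x_in; rewrite !ffunE edge_time_in // edge_time_rot2 //.
have := time_lt x_in; move: (time x) => i lt_i /eqP ip /eqP iq.
have le_iq : (i <= q) = (i < q) by rewrite leq_eqVlt; case: eqP.
split; first by rewrite le_iq.
case: (ltnP i.+1 len) => lt_Si.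
  by rewrite modn_small // ltnS leq_eqVlt; case: eqP => //= e; lia.
have -> : i.+1 = len by lia.
by rewrite modnn ltn0 /=; apply/esym/negbTE; apply/negP => /andP[_ ?]; lia.
Qed.

Lemma interleave_sym (i j p q : nat) : p < q -> i != j -> i != p -> i != q -> j != p -> j != q ->
  (p < i < q) != (p < j < q) -> (minn i j < p < maxn i j) != (minn i j < q < maxn i j).
Proof. by move=> *; lia. Qed.

Definition lo_dart d0 := iter (lo d0) walk b.
Definition hi_dart d0 := iter (hi d0) walk b.

Lemma lo_dart_in d0 : lo_dart d0 \in traversal.
Proof. exact: iter_walk_in. Qed.

Lemma hi_dart_in d0 : hi_dart d0 \in traversal.
Proof. exact: iter_walk_in. Qed.

Lemma time_lo_dart d0 : time (lo_dart d0) = lo d0.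
Proof. by have /andP[lt_lh lt_h] := lo_lt_hi d0; rewrite time_iter // (ltn_trans lt_lh). Qed.

Lemma time_hi_dart d0 : time (hi_dart d0) = hi d0.
Proof. by have /andP[_ lt_h] := lo_lt_hi d0; rewrite time_iter. Qed.

Lemma lo_dart_crossing d0 : lo_dart d0 \in porbit rot d0.
Proof. by rewrite mem_crossing_visit /visit strand_in_id ?lo_dart_in // time_lo_dart eqxx. Qed.

Lemma hi_dart_crossing d0 : hi_dart d0 \in porbit rot d0.
Proof. by rewrite mem_crossing_visit /visit strand_in_id ?hi_dart_in // time_hi_dart eqxx orbT. Qed.

Lemma hi_dart_rot d0 : hi_dart d0 = r (lo_dart d0) \/ hi_dart d0 = r (r (r (lo_dart d0))).
Proof.
have : hi_dart d0 \in porbit rot (lo_dart d0).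
  by rewrite (porbit_eq (lo_dart_crossing d0)) hi_dart_crossing.
rewrite mem_crossing !inE => /or4P[]/eqP e; [| by left | | by right].
  by have := lo_lt_hi d0; rewrite -time_lo_dart -time_hi_dart e; lia.
by move: (rot2_notin (lo_dart_in d0)); rewrite -e hi_dart_in.
Qed.

Lemma loop_visit_darts d0 :
  [/\ loop d0 (lo_dart d0) = false, loop d0 (r (r (lo_dart d0))) = true,
      loop d0 (hi_dart d0) = true & loop d0 (r (r (hi_dart d0))) = false].
Proof.
have /andP[lt_lh lt_h] := lo_lt_hi d0.
rewrite /loop !ffunE (edge_time_in (lo_dart_in d0)) (edge_time_in (hi_dart_in d0)).
rewrite (edge_time_rot2 (lo_dart_in d0)) (edge_time_rot2 (hi_dart_in d0)) time_lo_dart time_hi_dart.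
split; first by rewrite ltnn.
- by rewrite modn_small ?ltnSn //=; lia.
- by rewrite lt_lh leqnn.
case: (ltnP (hi d0).+1 len) => lt_Sh; first by rewrite modn_small // ltnn andbF.
have -> : (hi d0).+1 = len by lia.
by rewrite modnn.
Qed.

(* If the two visits of [y]'s crossing interleave_sym with those of [d0], the loop
   of [y] passes through the crossing of [d0] along exactly one strand. *)
Lemma nugatory_not_interleaved d0 y : nugatory d0 -> y \in traversal -> y \notin porbit rot d0 ->
  (lo d0 < time y < hi d0) = (lo d0 < visit (r y) < hi d0).
Proof.
move=> nug_d0 y_in y_out; apply/eqP/negPn/negP => interleaved.
have [ylo yhi] := visit_off y_out; rewrite /visit strand_in_id // in ylo yhi.
have [rylo ryhi] : visit (r y) != lo d0 /\ visit (r y) != hi d0.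
  by apply: visit_off; rewrite mem_crossing_rot.
have y_neq : time y != visit (r y).
  apply: contraNneq (strand_in_neq y) => /(time_inj y_in (strand_in_in _)) e.
  by rewrite strand_in_id // -e.
have /andP[lt_lh _] := lo_lt_hi d0.
have := interleave_sym lt_lh y_neq ylo yhi rylo ryhi interleaved.
have -> : minn (time y) (visit (r y)) = lo y by rewrite /lo /visit (strand_in_id y_in).
have -> : maxn (time y) (visit (r y)) = hi y by rewrite /hi /visit (strand_in_id y_in).
rewrite -(time_lo_dart d0) -(time_hi_dart d0) => loop_y_mixed.
have [g g_inv dg] := loop_colouring y.
have visit_off_y z : z \in porbit rot d0 -> z \in traversal -> time z != lo y /\ time z != hi y.
  move=> z_d0 z_in; rewrite -(strand_in_id z_in); apply: visit_off.
  by rewrite porbit_sym (porbit_eq z_d0).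
have [lo1 lo2] := visit_off_y _ (lo_dart_crossing d0) (lo_dart_in d0).
have [hi1 hi2] := visit_off_y _ (hi_dart_crossing d0) (hi_dart_in d0).
have [k1 k2] := arc_strand_off (lo_lt_hi y) (lo_dart_in d0) lo1 lo2.
have [k3 k4] := arc_strand_off (lo_lt_hi y) (hi_dart_in d0) hi1 hi2.
have := one_strand_not_nugatory g_inv dg (x := lo_dart d0).
rewrite (nugatory_crossing (lo_dart_crossing d0)) nug_d0 /loop k1 k2.
by case: (hi_dart_rot d0) => e; rewrite e ?rot4K in k3 k4 loop_y_mixed;
  rewrite k3 k4 => /(_ erefl erefl loop_y_mixed).
Qed.

Lemma loop_outside d0 y : nugatory d0 -> y \in traversal -> (time y < lo d0) || (hi d0 < time y) ->
  [/\ loop d0 y = false, loop d0 (r y) = false & loop d0 (r (r y)) = false].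
Proof.
move=> nug_d0 y_in y_outside; have /andP[lt_lh lt_h] := lo_lt_hi d0.
have ylo : time y != lo d0 by lia.
have yhi : time y != hi d0 by lia.
have y_out : y \notin porbit rot d0.
  by rewrite mem_crossing_visit /visit strand_in_id // negb_or ylo yhi.
have not_inside : (lo d0 < time y < hi d0) = false by apply/negbTE; lia.
have [rylo ryhi] : visit (r y) != lo d0 /\ visit (r y) != hi d0.
  by apply: visit_off; rewrite mem_crossing_rot.
have [k1 k2] := arc_strand_off (lo_lt_hi d0) y_in ylo yhi.
have [k3 k4] := arc_strand_off (lo_lt_hi d0) (strand_in_in (r y)) rylo ryhi.
rewrite -/(visit (r y)) -(nugatory_not_interleaved nug_d0 y_in y_out) not_inside in k3 k4.
rewrite not_inside in k1 k2; rewrite /loop k1 k2; split => //.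
by move: k3 k4; rewrite /strand_in; case: ifP => _ //; rewrite rot4K.
Qed.

Lemma colouring_walk g k y : g \in inv_funs face -> dface g = k ->
  k y = false -> k (r y) = false -> k (r (r y)) = false -> g (walk y) = g y.
Proof.
move=> g_inv dg k0 k1 k2; rewrite walkE (face_inv_opp _ g_inv).
by rewrite (dface_rot _ dg) (dface_rot _ dg) (dface_rot _ dg) k0 k1 k2 !addbF.
Qed.

Lemma normal_loop_colouring d0 :
  exists g, [/\ g \in inv_funs face, dface g = loop d0 & defect g d0 = false].
Proof.
have [g0 g0_inv dg0] := loop_colouring d0.
case def_g0: (defect g0 d0); last by exists g0.
exists (addf g0 onef); split; first exact: addf_inv_funs (onef_inv _).
  have dface_onef : dface onef = zerof by apply/ffunP=> x; rewrite !ffunE.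
  by rewrite dface_add dg0 dface_onef addf0.
move: def_g0 (region_diagonals d0); rewrite /defect !ffunE.
by case: (region d0 == _); case: (region (r d0) == _); case: (g0 d0); case: (g0 (r d0)).
Qed.

Section NormalColouring.
Variables (d0 : dart) (g : {ffun dart -> bool}).
Hypotheses (nug_d0 : nugatory d0) (g_inv : g \in inv_funs face).
Hypotheses (dg : dface g = loop d0) (def_d0 : defect g d0 = false).

Lemma colouring_past_hi : g (walk (hi_dart d0)) = false.
Proof.
have [c1 c2 c3 c4] := loop_visit_darts d0.
have def_x : defect g (lo_dart d0) = false.
  by rewrite (defect_crossing g_inv (lo_dart_crossing d0)).
have nug_x : nugatory (lo_dart d0) by rewrite (nugatory_crossing (lo_dart_crossing d0)).
rewrite walkE (face_inv_opp _ g_inv).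
set x := lo_dart d0 in c1 c2 def_x nug_x *.
have g1 : g (r x) = g x by rewrite (dface_rot _ dg) c1 addbF.
case: (hi_dart_rot d0) => e; rewrite e ?rot4K in c3 c4 *.
- have g2 : g (r (r x)) = ~~ g x by rewrite (dface_rot _ dg) g1 c3 addbT.
  have nf : region x != region (r (r x)).
    apply/negP=> /eqP ef; have : g (r (r x)) = g x.
      by apply: (inv_funs_porbit g_inv); rewrite ef porbit_id.
    by rewrite g2; case: (g x).
  by move: nug_x def_x; rewrite /nugatory /defect (negbTE nf) /= => ->; rewrite g1.
- have g2 : g (r (r x)) = g x by rewrite (dface_rot _ dg) g1 c4 addbF.
  have g3 : g (r (r (r x))) = ~~ g x by rewrite (dface_rot _ dg) g2 c2 addbT.
  have nf : region (r x) != region (r (r (r x))).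
    apply/negP=> /eqP ef; have : g (r (r (r x))) = g (r x).
      by apply: (inv_funs_porbit g_inv); rewrite ef porbit_id.
    by rewrite g3 g1; case: (g x).
  by move: nug_x def_x; rewrite /nugatory /defect (negbTE nf) orbF => -> /=; rewrite addbF g2.
Qed.

Lemma time_after_hi k : 0 < k -> k < len - (hi d0 - lo d0) ->
  let i := time (iter k walk (hi_dart d0)) in (i < lo d0) || (hi d0 < i).
Proof.
move=> k_gt0 k_lt /=; have /andP[lt_lh lt_h] := lo_lt_hi d0.
rewrite /hi_dart -iterD addnC iter_walk_mod time_iter ?ltn_pmod ?len_gt0 //.
case: (ltnP (hi d0 + k) len) => h; first by rewrite modn_small //; lia.
have -> : hi d0 + k = (hi d0 + k - len) + len by lia.
by rewrite modnDr modn_small; lia.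
Qed.

(* The part of the traversal outside the loop meets the loop only at crossings
   where [dface g] vanishes, so [g] is constant along it. *)
Lemma colouring_outside y : y \in traversal -> (time y < lo d0) || (hi d0 < time y) -> g y = false.
Proof.
move=> y_in y_outside; have /andP[lt_lh lt_h] := lo_lt_hi d0; have lt_y := time_lt y_in.
have after_hi k : 0 < k -> k <= len - (hi d0 - lo d0) -> g (iter k walk (hi_dart d0)) = false.
  elim: k => [//|[|k] IHk] _ le_k; first exact: colouring_past_hi.
  have z_in : iter k.+1 walk (hi_dart d0) \in traversal.
    by rewrite /hi_dart -iterD iter_walk_in.
  have [k0 k1 k2] := loop_outside nug_d0 z_in (time_after_hi (ltn0Sn k) le_k).
  by rewrite iterS (colouring_walk g_inv dg k0 k1 k2) IHk // ltnW.
pose k := if hi d0 < time y then time y - hi d0 else len - hi d0 + time y.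
have <- : iter k walk (hi_dart d0) = y.
  rewrite /hi_dart -iterD iter_walk_mod -[y](iter_time y_in); congr iter.
  rewrite /k; case: (ltnP (hi d0) (time y)) => h; first by rewrite modn_small; lia.
  have -> : len - hi d0 + time y + hi d0 = time y + len by lia.
  by rewrite modnDr modn_small.
by apply: after_hi; rewrite /k; case: (ltnP (hi d0) (time y)) => h; lia.
Qed.

Lemma defect_loop_shorter x : defect g x -> hi x - lo x < hi d0 - lo d0.
Proof.
move=> def_x; have x_out : x \notin porbit rot d0.
  by apply: contraTN def_x => /(defect_crossing g_inv)->; rewrite def_d0.
have y_x : strand_in x \in porbit rot x by rewrite -(porbit_strand_in x) porbit_id.
have y_out : strand_in x \notin porbit rot d0 by rewrite porbit_sym (porbit_eq y_x) -porbit_sym.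
have [xlo xhi] := visit_off x_out.
have [rxlo rxhi] : visit (r x) != lo d0 /\ visit (r x) != hi d0.
  by apply: visit_off; rewrite mem_crossing_rot.
have same := nugatory_not_interleaved nug_d0 (strand_in_in x) y_out.
rewrite /visit strand_in_rot -/(visit x) -/(visit (r x)) in same.
case inside: (lo d0 < visit x < hi d0).
  by move: inside same; rewrite /lo /hi; lia.
have y_outside : (visit x < lo d0) || (hi d0 < visit x) by move: inside; lia.
have gy := colouring_outside (strand_in_in x) y_outside.
have [k0 _ _] := loop_outside nug_d0 (strand_in_in x) y_outside.
have g1 : g (r (strand_in x)) = false by rewrite (dface_rot _ dg) k0 gy.
have : defect g (strand_in x) = false by rewrite /defect gy g1 !andbF.
by rewrite (defect_crossing g_inv y_x) def_x.
Qed.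

End NormalColouring.

Lemma realizable_loop g d0 : g \in inv_funs face -> dface g = loop d0 ->
  (forall x, defect g x -> realizable (crossing x)) -> realizable (crossing d0).
Proof.
move=> g_inv dg def_real.
rewrite -(addfK (crossing d0) (defectf g)) -rcc_effect_loop //.
apply: realizable_add.
  by exists (regions_of g) => //; apply/subsetP=> R; rewrite inE => /andP[].
by apply: realizable_inv_rot (defectf_inv g_inv) _ => x; rewrite ffunE; exact: def_real.
Qed.

Lemma realizable_nugatory n d0 : hi d0 - lo d0 <= n -> nugatory d0 -> realizable (crossing d0).
Proof.
elim: n d0 => [|n IHn] d0 short nug_d0; first by have := lo_lt_hi d0; lia.
have [g [g_inv dg def_d0]] := normal_loop_colouring d0.
apply: (realizable_loop g_inv dg) => x def_x; apply: IHn (defect_nugatory def_x).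
by have := defect_loop_shorter nug_d0 g_inv dg def_d0 def_x; lia.
Qed.

Lemma realizable_crossing d0 : realizable (crossing d0).
Proof.
have [g g_inv dg] := loop_colouring d0.
apply: (realizable_loop g_inv dg) => x def_x.
exact: realizable_nugatory (leqnn _) (defect_nugatory def_x).
Qed.

End Traversal.

Theorem region_cc_unknotting d : realizable (crossing d).
Proof. exact: (realizable_crossing d d). Qed.

End CombinatorialMap.

(** * Parity of the (star)-crossings *)

Section ParityOfStars.
Variables (dart : finType) (rot opp : {perm dart}).
Hypothesis oppK : involutive opp.
Hypothesis opp_neq : forall d, opp d != d.
Hypothesis card_crossing : forall d, #|porbit rot d| = 4.
Hypothesis map_connected : forall x y, connect (fun a b => (b == rot a) || (b == opp a)) x y.
Hypothesis euler_formula : #|porbits rot| + #|porbits (opp * rot)| = #|porbits opp| + 2.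
Hypothesis one_component : #|porbits (rot ^+ 2 * opp)| = 2.
Variable o : {ffun dart -> bool}.
Hypothesis ineffective_even : forall S, ineffective rot opp o S -> ~~ odd #|S|.

Implicit Types (S T : {set {set dart}}) (c : {set dart}).
Local Notation star c := (star_crossing rot opp o c).
Local Notation stars := [set c in crossings rot | star c].

Lemma region_cc_aboutE S : region_cc_about rot S o = addf o (rcc_effect rot S).
Proof. by apply/ffunP=> d; rewrite !ffunE. Qed.

Lemma crossing_changeE c : crossing_change c o = addf o (indicator c).
Proof. by apply/ffunP=> d; rewrite !ffunE. Qed.

Lemma realizable_crossing_set c : c \in crossings rot ->
  exists2 S : {set {set dart}}, S \subset regions rot opp & rcc_effect rot S = indicator c.
Proof.
by move=> /imsetP[d _ ->]; exact: (region_cc_unknotting oppK opp_neq card_crossing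
  map_connected euler_formula one_component d).
Qed.

Lemma odd_card_rcc_effect S T : S \subset regions rot opp -> T \subset regions rot opp ->
  rcc_effect rot S = rcc_effect rot T -> odd #|S| = odd #|T|.
Proof.
move=> S_sub T_sub eST.
have ineff : ineffective rot opp o (sdiff S T).
  split; first exact: sdiff_sub.
  by rewrite region_cc_aboutE rcc_effect_sdiff eST addff addf0.
by move: (ineffective_even ineff); rewrite odd_sdiff; case: (odd #|S|); case: (odd #|T|).
Qed.

Lemma star_crossingE c S : S \subset regions rot opp -> rcc_effect rot S = indicator c ->
  star c = odd #|S|.
Proof.
move=> S_sub eS; apply/existsP/idP => [[T /and3P[T_sub oddT /eqP eT]] | oddS].
  rewrite region_cc_aboutE crossing_changeE in eT.
  by rewrite -(odd_card_rcc_effect T_sub S_sub) // (addfI eT) eS.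
by exists S; rewrite S_sub oddS region_cc_aboutE crossing_changeE eS eqxx.
Qed.

Lemma freeze_foldE (s : seq {set dart}) (o' : {ffun dart -> bool}) :
  foldl (fun o'' R => region_freeze_cc rot R o'') o' s =
  [ffun d => o' d (+) odd (size s) (+) odd (count (fun R => touches R (crossing_of rot d)) s)].
Proof.
elim: s o' => [|R s IHs] o' /=; first by apply/ffunP=> d; rewrite !ffunE !addbF.
rewrite IHs; apply/ffunP=> d; rewrite !ffunE oddD.
by case: (o' d); case: (touches R _); case: (odd (size s)); case: (odd (count _ s)).
Qed.

(* A freeze change at [R] is a region crossing change at [R] followed by a
   change of every crossing, and only the parity of the multiplicity of each
   region in the sequence matters. *)
Lemma freeze_realizableP c : freeze_realizable rot opp o c <->
  exists2 S : {set {set dart}}, S \subset regions rot opp &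
    forall d, odd #|S| (+) rcc_effect rot S d = (d \in c).
Proof.
split=> [[s [s_regions freeze_s]] | [S S_sub eS]].
  exists [set R | odd (count_mem R s)].
    apply/subsetP=> R; rewrite inE => odd_R; apply: (allP s_regions).
    by rewrite -has_pred1 has_count; move: odd_R; case: (count _ s).
  move=> d; have := congr1 (fun f : {ffun dart -> bool} => f d) freeze_s.
  rewrite freeze_foldE !ffunE -addbA => /addbI <-.
  rewrite (odd_count_odd_mult s predT).
  rewrite (odd_count_odd_mult s (fun R => touches R (crossing_of rot d))).
  by congr (odd _ (+) odd _); apply: eq_card => R; rewrite !inE ?andbT.
exists (enum S); split; first by apply/allP=> R; rewrite mem_enum => /(subsetP S_sub).
rewrite freeze_foldE; apply/ffunP=> d; rewrite !ffunE -eS !ffunE -cardE -addbA.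
congr (_ (+) (_ (+) odd _)); rewrite -card_mem_uniq ?enum_uniq //.
by apply: eq_card => R; rewrite !inE mem_enum.
Qed.

Lemma mem_crossing_of c d : c \in crossings rot -> (d \in c) = (crossing_of rot d == c).
Proof. by move=> /imsetP[d0 _ ->]; rewrite /crossing_of eq_porbit_mem. Qed.

Lemma stars_effect_in (C : {set {set dart}}) : C \subset crossings rot ->
  exists2 S : {set {set dart}}, S \subset regions rot opp &
    rcc_effect rot S = [ffun d => crossing_of rot d \in C] /\
    odd #|S| = odd #|[set c in C | star c]|.
Proof.
have [n] := ubnP #|C|; elim: n C => // n IHn C card_C C_sub.
case: (set_0Vmem C) => [-> | [c c_C]].
  exists set0; rewrite ?sub0set //; split.
    by rewrite rcc_effect0; apply/ffunP=> d; rewrite !ffunE inE.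
  by rewrite cards0 (_ : [set c in set0 | _] = set0) ?cards0 //; apply/setP=> x; rewrite !inE.
have c_cross : c \in crossings rot := subsetP C_sub c c_C.
have card_Cc : #|C :\ c| < n by move: card_C; rewrite (cardsD1 c C) c_C.
have [S S_sub [eS oddS]] := IHn _ card_Cc (subset_trans (subsetDl _ _) C_sub).
have [Sc Sc_sub eSc] := realizable_crossing_set c_cross.
exists (sdiff S Sc); first exact: sdiff_sub.
split.
  rewrite rcc_effect_sdiff eS eSc; apply/ffunP=> d; rewrite !ffunE (mem_crossing_of d c_cross) !inE.
  by case: (crossing_of rot d =P c) => [->|_]; rewrite ?c_C ?addbF.
rewrite odd_sdiff oddS -(star_crossingE Sc_sub eSc) [in RHS](cardsD1 c) !inE c_C /=.
have -> : [set c0 in C | star c0] :\ c = [set c0 in C :\ c | star c0].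
  by apply/setP=> x; rewrite !inE andbA.
by rewrite oddD addbC; case: (star c).
Qed.

Lemma freeze_realizableE c : c \in crossings rot ->
  freeze_realizable rot opp o c <-> (star c ==> ~~ odd #|stars|).
Proof.
move=> c_cross; have [Sc Sc_sub eSc] := realizable_crossing_set c_cross.
have [Sa Sa_sub [eSa oddSa]] := stars_effect_in (subxx (crossings rot)).
have all_crossings : rcc_effect rot Sa = onef.
  by rewrite eSa; apply/ffunP=> d; rewrite !ffunE imset_f.
rewrite (star_crossingE Sc_sub eSc) freeze_realizableP; split=> [[S S_sub eS] | ].
  case oddS: (odd #|S|) in eS.
    have : rcc_effect rot S = rcc_effect rot (sdiff Sc Sa).
      apply/ffunP=> d; move: (eS d); rewrite rcc_effect_sdiff all_crossings eSc !ffunE => <-.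
      by case: (odd _).
    by move/(odd_card_rcc_effect S_sub (sdiff_sub Sc_sub Sa_sub)); rewrite odd_sdiff oddS oddSa;
      case: (odd #|Sc|); case: (odd #|stars|).
  have : rcc_effect rot S = rcc_effect rot Sc.
    by apply/ffunP=> d; rewrite eSc [indicator _ _]ffunE -eS.
  by move/(odd_card_rcc_effect S_sub Sc_sub); rewrite oddS => <-.
case oddSc: (odd #|Sc|) => //= even_stars.
  exists (sdiff Sc Sa); first exact: sdiff_sub.
  move=> d; rewrite odd_sdiff oddSa (negbTE even_stars) oddSc rcc_effect_sdiff all_crossings eSc.
  rewrite !ffunE.
  by case: (d \in c).
by exists Sc => // d; rewrite oddSc eSc ffunE.
Qed.

End ParityOfStars.

Unset Implicit Arguments.

Theorem theorem3p5 (dart : finType) (rot opp : {perm dart})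
  (hP : is_knot_projection rot opp) (o : {ffun dart -> bool})
  (ho : valid_over rot o)
  (heven : forall S : {set {set dart}}, ineffective rot opp o S -> ~~ odd #|S|) :
  (forall c, c \in crossings rot -> freeze_realizable rot opp o c) <->
  ~~ odd #|[set c in crossings rot | star_crossing rot opp o c]|.
Proof.
have [opp_inv card_crossing map_connected euler_formula one_component] := hP.
have oppK : involutive opp by move=> d; case: (opp_inv d).
have opp_neq d : opp d != d by case: (opp_inv d).
have realizableE := freeze_realizableE oppK opp_neq card_crossing map_connected
  euler_formula one_component heven.
split=> [all_realizable | even_stars c c_cross].
  apply/negP=> odd_stars.
  have /set0Pn[c] : [set c in crossings rot | star_crossing rot opp o c] != set0.
    by apply: contraTneq odd_stars => ->; rewrite cards0.
  rewrite inE => /andP[c_cross star_c].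
  by have := (realizableE c c_cross).1 (all_realizable c c_cross); rewrite star_c odd_stars.
by apply/(realizableE c c_cross); rewrite even_stars implybT.
Qed.
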